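(* Let $q=(n^2+3n)/2$, $n<p<q$, $\delta>0$, $\Lambda>0$, and let $\mathcal{Y}=\{y^0,y^1,\dots,y^p\}\subset\mathbb{R}^n$ be a $\Lambda$-poised set in $\overline{B}(y^0,\delta)$ in the minimum Frobenius norm sense. Let $\mathbf{L}_s\in\mathbb{R}^{p\times n}$ be the matrix whose $i$-th row is $(y^i-y^0)^T$, $i=1,\dots,p$, and $\hat{\mathbf{L}}_s=\frac1\delta\mathbf{L}_s$. Then \[ \|\hat{\mathbf{L}}_s^{\dagger}\|\le\Lambda\sqrt{2(n+1)}\,(p+1), \] where $\hat{\mathbf{L}}_s^{\dagger}$ is the Moore--Penrose pseudo-inverse of $\hat{\mathbf{L}}_s$.
   Context: $\overline{B}(x,\delta)$ is the closed Euclidean ball; $\|\cdot\|$ is the Euclidean norm / induced matrix norm, $\|\cdot\|_\infty$ the max norm. Natural basis of quadratic polynomials: $\overline\phi_L(x)=(1,x_1,\dots,x_n)$ and $\overline\phi_Q(x)=(\tfrac12x_1^2,x_1x_2,\dots,x_1x_n,\tfrac12x_2^2,\dots,x_{n-1}x_n,\tfrac12x_n^2)$. For a list of functions $\phi=(\phi_0,\dots,\phi_r)$, $\mathbf{M}(\phi,\mathcal{Y})$ is the $(p+1)\times(r+1)$ matrix with $(i,k)$ entry $\phi_k(y^i)$. $\mathcal{Y}$ is poised in the minimum Frobenius norm sense if the matrix $\begin{bmatrix}\mathbf{M}(\overline\phi_Q,\mathcal{Y})\mathbf{M}(\overline\phi_Q,\mathcal{Y})^T & \mathbf{M}(\overline\phi_L,\mathcal{Y})\\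 \mathbf{M}(\overline\phi_L,\mathcal{Y})^T & 0\end{bmatrix}$ is nonsingular. A poised set $\mathcal{Y}$ is $\Lambda$-poised in $B\subseteq\mathbb{R}^n$ in the minimum Frobenius norm sense if for every $x\in B$ the solution $\lambda(x)\in\mathbb{R}^{p+1}$ of $\min\frac12\|\mathbf{M}(\overline\phi_Q,\mathcal{Y})^T\lambda-\overline\phi_Q(x)\|^2$ subject to $\mathbf{M}(\overline\phi_L,\mathcal{Y})^T\lambda=\overline\phi_L(x)$ satisfies $\|\lambda(x)\|_\infty\le\Lambda$. *)

From HB Require Import structures.
From mathcomp Require Import all_boot all_order all_algebra.
From mathcomp Require Import boolp classical_sets reals.
Set Implicit Arguments. Unset Strict Implicit. Unset Printing Implicit Defensive.
Import Order.TTheory GRing.Theory Num.Theory.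
Local Open Scope ring_scope.

Section Defs.
Variable R : realType.

Definition rnorm k (v : 'rV[R]_k) : R := Num.sqrt (\sum_(j < k) v 0 j ^+ 2).
Definition cnorm k (v : 'cV[R]_k) : R := Num.sqrt (\sum_(i < k) v i 0 ^+ 2).

Definition infnorm k (v : 'cV[R]_k) : R := \big[Num.max/0]_(i < k) `|v i 0|.

Definition opnorm m k (A : 'M[R]_(m, k)) : R :=
  sup [set r : R | exists x : 'cV[R]_k, cnorm x <= 1 /\ r = cnorm (A *m x)].

Definition cball n (c : 'rV[R]_n) (d : R) : set 'rV[R]_n :=
  [set x | rnorm (x - c) <= d].

Definition is_MP_pinv m k (A : 'M[R]_(m, k)) (X : 'M[R]_(k, m)) : Prop :=
  [/\ A *m X *m A = A, X *m A *m X = X, (A *m X)^T = A *m X & (X *m A)^T = X *m A].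

(* natural basis of quadratic polynomials *)
Definition phiL n (x : 'rV[R]_n) : 'rV[R]_(1 + n) := row_mx (const_mx 1) x.

Definition QIdx n := {ij : 'I_n * 'I_n | (ij.1 <= ij.2)%N}.

(* components (1/2 x_i^2, x_i x_j (i<j)) in lexicographic order of (i,j), i<=j *)
Definition phiQ n (x : 'rV[R]_n) : 'rV[R]_#|{: QIdx n}| :=
  \row_(c < #|{: QIdx n}|)
     let ij := val (enum_val c) in
     if ij.1 == ij.2 then x 0 ij.1 ^+ 2 / 2 else x 0 ij.1 * x 0 ij.2.

Definition Mphi n r m (phi : 'rV[R]_n -> 'rV[R]_r) (y : 'I_m -> 'rV[R]_n)
  : 'M[R]_(m, r) := \matrix_(i < m, k < r) phi (y i) 0 k.

Definition MFN_poised n m (y : 'I_m -> 'rV[R]_n) : Prop :=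
  let MQ := Mphi (@phiQ n) y in
  let ML := Mphi (@phiL n) y in
  block_mx (MQ *m MQ^T) ML ML^T 0 \in unitmx.

Definition MFN_lambda n m (y : 'I_m -> 'rV[R]_n) (x : 'rV[R]_n) (lam : 'cV[R]_m)
  : Prop :=
  let MQ := Mphi (@phiQ n) y in
  let ML := Mphi (@phiL n) y in
  ML^T *m lam = (phiL x)^T /\
  forall lam' : 'cV[R]_m, ML^T *m lam' = (phiL x)^T ->
    cnorm (MQ^T *m lam - (phiQ x)^T) ^+ 2 / 2
      <= cnorm (MQ^T *m lam' - (phiQ x)^T) ^+ 2 / 2.

Definition MFN_Lambda_poised n m (y : 'I_m -> 'rV[R]_n) (Lam : R)
  (B : set 'rV[R]_n) : Prop :=
  MFN_poised y /\
  forall x, B x -> forall lam, MFN_lambda y x lam -> infnorm lam <= Lam.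

Definition Lmat n p (y : 'I_p.+1 -> 'rV[R]_n) : 'M[R]_(p, n) :=
  \matrix_(i < p, j < n) (y (lift ord0 i) 0 j - y ord0 0 j).

End Defs.

(* For a unit vector v, the point x = y^0 + delta v lies in the ball, so Lambda-poisedness gives
   weights lambda(x) with sum_i lambda_i = 1 and sum_i lambda_i y^i = x; hence the tail
   mu = (lambda_1, ..., lambda_p) solves  Lhat^T mu = v  with  |mu|_oo <= Lambda.  Taking
   v = X w / |X w| for |w| <= 1 and X the pseudo-inverse of Lhat gives
   |X w| = v^T X w = mu^T (Lhat X) w, and Lhat X is an orthogonal projection, so every entry of
   (Lhat X) w is at most 1 in absolute value.  Thus |X| <= Lambda p, which is stronger than the
   claimed bound. *)

From HB Require Import structures.
From mathcomp Require Import all_boot all_order all_algebra.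
From mathcomp Require Import boolp classical_sets reals.
From mathcomp.algebra_tactics Require Import ring lra.
Import Order.TTheory GRing.Theory Num.Theory.
Set Implicit Arguments. Unset Strict Implicit.
Local Open Scope ring_scope.

Section EuclideanNorm.
Variable R : realType.

Lemma dotmxE k (a b : 'cV[R]_k) : (a^T *m b) 0 0 = \sum_i a i 0 * b i 0.
Proof. by rewrite mxE; apply: eq_bigr => i _; rewrite mxE. Qed.

Lemma cnorm_ge0 k (c : 'cV[R]_k) : 0 <= cnorm c.
Proof. exact: sqrtr_ge0. Qed.

Lemma cnorm_sqr k (c : 'cV[R]_k) : cnorm c ^+ 2 = (c^T *m c) 0 0.
Proof.
rewrite /cnorm sqr_sqrtr ?sumr_ge0 // => [|i _]; last exact: sqr_ge0.
by rewrite dotmxE; apply: eq_bigr => i _; rewrite expr2.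
Qed.

Lemma cnorm0 k : cnorm (0 : 'cV[R]_k) = 0.
Proof. by rewrite /cnorm big1 ?sqrtr0 // => i _; rewrite mxE expr0n. Qed.

Lemma cnormZ k a (c : 'cV[R]_k) : cnorm (a *: c) = `|a| * cnorm c.
Proof.
rewrite /cnorm (eq_bigr (fun i => a ^+ 2 * c i 0 ^+ 2)) => [|i _]; last first.
  by rewrite mxE exprMn.
by rewrite -mulr_sumr sqrtrM ?sqr_ge0 // sqrtr_sqr.
Qed.

Lemma rnorm_tr k (c : 'cV[R]_k) : rnorm c^T = cnorm c.
Proof. by rewrite /rnorm /cnorm; congr Num.sqrt; apply: eq_bigr => i _; rewrite mxE. Qed.

Lemma norm_entry_le_cnorm k (c : 'cV[R]_k) i : `|c i 0| <= cnorm c.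
Proof.
rewrite -sqrtr_sqr ler_sqrt ?sumr_ge0 // => [|j _]; last exact: sqr_ge0.
rewrite (bigD1 i) //= lerDl sumr_ge0 // => j _; exact: sqr_ge0.
Qed.

Lemma cnorm_sqrD_orth k (a b : 'cV[R]_k) :
  a^T *m b = 0 -> cnorm (a + b) ^+ 2 = cnorm a ^+ 2 + cnorm b ^+ 2.
Proof.
move=> ab0; have ba0 : b^T *m a = 0 by rewrite -[b^T *m a]trmxK trmx_mul trmxK ab0 trmx0.
by rewrite !cnorm_sqr mulmxDr !linearD /= !mulmxDl ab0 ba0 addr0 add0r mxE.
Qed.

Lemma cnorm_proj_le k (P : 'M[R]_k) (w : 'cV[R]_k) :
  P^T = P -> P *m P = P -> cnorm (P *m w) <= cnorm w.
Proof.
move=> PT PP; rewrite -ler_sqr ?nnegrE ?cnorm_ge0 //.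
have orth : (P *m w)^T *m (w - P *m w) = 0.
  by rewrite trmx_mul PT mulmxBr !mulmxA -(mulmxA _ P P) PP subrr.
rewrite -{2}[w](addrNK (P *m w)) addrC cnorm_sqrD_orth // lerDl.
exact: sqr_ge0.
Qed.

Lemma opnorm_le m k (A : 'M[R]_(m, k)) b :
  (forall x, cnorm x <= 1 -> cnorm (A *m x) <= b) -> opnorm A <= b.
Proof.
move=> Ab; apply: ge_sup; last by move=> r [x [x_le1 ->]]; exact: Ab.
by exists (cnorm (A *m 0)), 0; rewrite cnorm0.
Qed.

End EuclideanNorm.

Section PseudoInverse.
Variable R : realType.

Lemma MP_pinv_opnorm_le p n (A : 'M[R]_(p, n)) X K :
  is_MP_pinv A X -> 0 <= K ->
  (forall v, cnorm v <= 1 -> exists2 mu, A^T *m mu = v & forall i, `|mu i 0| <= K) ->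
  opnorm X <= K * p%:R.
Proof.
move=> [AXA _ AXT _] K_ge0 Abal; apply: opnorm_le => w w_le1.
set z := X *m w; have [->|z_neq0] := eqVneq (cnorm z) 0.
  by rewrite mulr_ge0.
have [|mu Amu muK] := Abal ((cnorm z)^-1 *: z).
  by rewrite cnormZ ger0_norm ?invr_ge0 ?cnorm_ge0 // mulVf.
have zE : cnorm z = (mu^T *m (A *m X *m w)) 0 0.
  rewrite !mulmxA -[A]trmxK -trmx_mul Amu -mulmxA -/z linearZ /= -scalemxAl mxE.
  by rewrite -cnorm_sqr expr2 mulrA mulVf ?mul1r.
have AXw_le1 i : `|(A *m X *m w) i 0| <= 1.
  apply: le_trans (norm_entry_le_cnorm _ i) _; apply: le_trans w_le1.
  by apply: cnorm_proj_le; rewrite // mulmxA AXA.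
rewrite zE dotmxE mulr_natr -[in K *+ p](card_ord p) -sumr_const.
apply: ler_sum => i _; apply: le_trans (ler_norm _) _; rewrite normrM.
by rewrite -[K]mulr1 ler_pM ?normr_ge0.
Qed.

End PseudoInverse.

Section MinimumFrobeniusNorm.
Variable R : realType.

(* The KKT system is the block matrix of [MFN_poised]; its first block component is optimal
   because the residual of the solution is orthogonal to MQ^T ker(ML^T). *)
Lemma MFN_lambda_exists n m (y : 'I_m -> 'rV[R]_n) x :
  MFN_poised y -> exists lam, MFN_lambda y x lam.
Proof.
rewrite /MFN_poised /MFN_lambda /=; set MQ := Mphi _ y; set ML := Mphi _ y => KKT_unit.
set s := invmx (block_mx (MQ *m MQ^T) ML ML^T 0) *m col_mx (MQ *m (phiQ x)^T) (phiL x)^T.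
have KKT : block_mx (MQ *m MQ^T) ML ML^T 0 *m col_mx (usubmx s) (dsubmx s)
    = col_mx (MQ *m (phiQ x)^T) (phiL x)^T.
  by rewrite vsubmxK /s mulmxA mulmxV // mul1mx.
rewrite mul_block_col mul0mx addr0 in KKT; case/eq_col_mx: KKT => stationary feasible.
exists (usubmx s); split => // lam' lam'_feasible.
set res := MQ^T *m usubmx s - (phiQ x)^T.
have -> : MQ^T *m lam' - (phiQ x)^T = res + MQ^T *m (lam' - usubmx s).
  by rewrite mulmxBr [RHS]addrC addrA subrK.
have res_orth : res^T *m (MQ^T *m (lam' - usubmx s)) = 0.
  have MQres : MQ *m res = - (ML *m dsubmx s).
    by rewrite mulmxBr mulmxA -stationary opprD addrA subrr add0r.
  rewrite mulmxA -trmx_mul MQres raddfN /= mulNmx trmx_mul -mulmxA.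
  by rewrite mulmxBr lam'_feasible feasible subrr mulmx0 oppr0.
rewrite (cnorm_sqrD_orth res_orth) ler_pM2r ?invr_gt0 ?ltr0n // lerDl; exact: sqr_ge0.
Qed.

Lemma Mphi_phiL_constraint n m (y : 'I_m -> 'rV[R]_n) x (lam : 'cV[R]_m) :
  (Mphi (@phiL R n) y)^T *m lam = (phiL x)^T ->
  \sum_i lam i 0 = 1 /\ \sum_i lam i 0 *: y i = x.
Proof.
move=> /matrixP constraint.
have entryE k : \sum_i phiL (y i) 0 k * lam i 0 = phiL x 0 k.
  by have := constraint k 0; rewrite mxE [RHS]mxE => <-; apply: eq_bigr => i _; rewrite !mxE.
split.
  have := entryE (lshift n (ord0 : 'I_1)).
  by rewrite /phiL row_mxEl mxE => <-; apply: eq_bigr => i _; rewrite row_mxEl mxE mul1r.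
apply/rowP => j; rewrite summxE -(row_mxEr (const_mx 1 : 'rV_1) x) -entryE.
by apply: eq_bigr => i _; rewrite row_mxEr mxE mulrC.
Qed.

Lemma Lmat_tr_mul_weights n p (y : 'I_p.+1 -> 'rV[R]_n) x (lam : 'cV[R]_p.+1) :
  \sum_i lam i 0 = 1 -> \sum_i lam i 0 *: y i = x ->
  (Lmat y)^T *m (\col_i lam (lift ord0 i) 0) = (x - y ord0)^T.
Proof.
move=> sum1 affine; apply/matrixP => j k; rewrite (ord1 k) !mxE -affine summxE.
have -> : \sum_i (lam i 0 *: y i) 0 j - y ord0 0 j
    = \sum_i (y i 0 j - y ord0 0 j) * lam i 0.
  rewrite -[y ord0 0 j]mul1r -{1}sum1 mulr_suml -sumrB.
  by apply: eq_bigr => i _; rewrite mxE; ring.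
rewrite big_ord_recl subrr mul0r add0r.
by apply: eq_bigr => i _; rewrite !mxE.
Qed.

End MinimumFrobeniusNorm.

Theorem theorem4 (R : realType) (n p : nat) (delta Lam : R)
  (y : 'I_p.+1 -> 'rV[R]_n) :
  (n < p)%N -> (p < (n ^ 2 + 3 * n) %/ 2)%N ->
  0 < delta -> 0 < Lam ->
  MFN_Lambda_poised y Lam (cball (y ord0) delta) ->
  forall X : 'M[R]_(n, p), is_MP_pinv (delta^-1 *: Lmat y) X ->
    opnorm X <= Lam * Num.sqrt (2 * n.+1%:R) * p.+1%:R.
Proof.
move=> _ _ delta_gt0 Lam_gt0 [poised lam_bounded] X pinvX.
apply: (@le_trans _ _ (Lam * p%:R)).
  apply: (MP_pinv_opnorm_le pinvX (ltW Lam_gt0)) => v v_le1.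
  set x := y ord0 + delta *: v^T.
  have x_ball : cball (y ord0) delta x.
    rewrite /cball /x /= addrC addKr -linearZ rnorm_tr cnormZ gtr0_norm //.
    by rewrite -[leRHS]mulr1 ler_pM2l.
  have [lam lamP] := MFN_lambda_exists x poised.
  have [sum1 affine] := Mphi_phiL_constraint lamP.1.
  exists (\col_i lam (lift ord0 i) 0) => [|i].
    rewrite linearZ /= -scalemxAl (Lmat_tr_mul_weights sum1 affine) /x addrC addKr.
    by rewrite linearZ /= trmxK scalerA mulVf ?gt_eqF // scale1r.
  rewrite mxE; apply: le_trans (lam_bounded x x_ball lam lamP).
  exact: (le_bigmax _ (fun k => `|lam k 0|)).
have sqrt_ge1 : 1 <= Num.sqrt (2 * n.+1%:R) :> R.
  rewrite -{1}sqrtr1 ler_sqrt ?mulr_ge0 //.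
  have : 1 <= n.+1%:R :> R by rewrite ler1n.
  lra.
rewrite -mulrA ler_pM2l // -[leLHS]mul1r ler_pM ?ler_nat //.
Qed.
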